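(* Let $H$ be a finite dimensional $G$-graded $G$-module. For all $b\in B_n$, $x\in(H^\ast)^{\otimes n}$ and $v\in H^{\otimes n}$, $(b\cdot x)(v)=x(r(b)\cdot v)$.
   Context: $G$ finite group. A $G$-graded $G$-module is $H=\bigoplus_{m\in G}H_m$ with a $G$-action satisfying $\gamma H_m=H_{\gamma m\gamma^{-1}}$. $H^\ast$ is a $G$-graded $G$-module via $(\gamma x)(v)=x(\gamma^{-1}v)$ and $(H^\ast)_m=(H_{m^{-1}})^\ast$. For any $G$-graded $G$-module $V$, $B_n$ (generators $b_1,\dots,b_{n-1}$) acts on $V^{\otimes n}$ by $b_i(v_1\otimes\cdots\otimes v_n)=v_1\otimes\cdots\otimes(\gamma_iv_{i+1})\otimes v_i\otimes\cdots\otimes v_n$ for $v_j\in V_{\gamma_j}$; this is applied to both $V=H$ and $V=H^\ast$. The pairing of $(H^\ast)^{\otimes n}$ with $H^{\otimes n}$ is $(x_1\otimes\cdots\otimes x_n)(v_1\otimes\cdots\otimes v_n)=x_n(v_1)x_{n-1}(v_2)\cdots x_1(v_n)$. The reflection $r:B_n\to B_n$ is the antihomomorphism with $r(b_i)=b_{n-i}$. *)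

From HB Require Import structures.
From mathcomp Require Import all_boot all_order all_algebra all_fingroup.
Set Implicit Arguments. Unset Strict Implicit. Unset Printing Implicit Defensive.
Import GRing.Theory.
Local Open Scope ring_scope.

(* Model:
   H = K^d with a homogeneous basis e_0..e_{d-1}; basis vector e_a has degree
   deg a.  The G-action is given by matrices M g in the column convention:
   g . e_j = \sum_i M g i j e_i.  On row vectors: g . v = v *m (M g)^T.
   H^{(x) n} is modelled by coordinates with respect to the basis
   e_{w 0} (x) ... (x) e_{w (n-1)}, w : {ffun 'I_n -> 'I_d}. *)

Notation tensor K d n := ({ffun {ffun 'I_n -> 'I_d} -> K}).

Section Braid.
Variables (K : fieldType) (gT : finGroupType) (d n : nat).


Definition graded_module (deg : 'I_d -> gT) (M : gT -> 'M[K]_d) : Prop :=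
  [/\ M 1%g = 1%:M,
      forall g h : gT, M (g * h)%g = M g *m M h
    & forall (g : gT) (i j : 'I_d), M g i j != 0 -> deg i = (g * deg j * g^-1)%g].

(* the dual H^*, with dual basis e^a of degree (deg a)^-1 and
   (g x)(v) = x(g^-1 v), written in the same model *)
Definition dual_deg (deg : 'I_d -> gT) : 'I_d -> gT := fun i => ((deg i)^-1)%g.
Definition dual_rep (M : gT -> 'M[K]_d) : gT -> 'M[K]_d := fun g => (M (g^-1)%g)^T.

Definition gactv (M : gT -> 'M[K]_d) (g : gT) (v : 'rV[K]_d) : 'rV[K]_d :=
  v *m (M g)^T.

Definition bvec (a : 'I_d) : 'rV[K]_d := delta_mx 0 a.

Definition ptensor (f : 'I_n -> 'rV[K]_d) : tensor K d n :=
  [ffun u : {ffun 'I_n -> 'I_d} => \prod_j f j 0 (u j)].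

(* generator index k : 'I_n.-1 stands for b_{k+1}, acting on (0-based)
   positions k and k+1 *)
Lemma pos0_subproof (k : 'I_n.-1) : (k < n)%N.
Proof. case: n k => [[]//|m] [k /= hk]. by apply: ltnW. Qed.
Lemma pos1_subproof (k : 'I_n.-1) : (k.+1 < n)%N.
Proof. case: n k => [[]//|m] [k /= hk]. by rewrite ltnS. Qed.
Definition pos0 (k : 'I_n.-1) : 'I_n := Ordinal (pos0_subproof k).
Definition pos1 (k : 'I_n.-1) : 'I_n := Ordinal (pos1_subproof k).

(* b (v_1 (x) .. (x) v_n) = v_1 (x) .. (x) (gamma_i v_{i+1}) (x) v_i (x) .. *)
Definition gen_on_basis (deg : 'I_d -> gT) (M : gT -> 'M[K]_d) (k : 'I_n.-1)
    (w : {ffun 'I_n -> 'I_d}) : tensor K d n :=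
  ptensor (fun p => if p == pos0 k then gactv M (deg (w (pos0 k))) (bvec (w (pos1 k)))
                    else if p == pos1 k then bvec (w (pos0 k))
                    else bvec (w p)).

(* b^-1 (v_1 (x) .. (x) v_n) = v_1 (x) .. (x) v_{i+1} (x) (gamma_{i+1}^-1 v_i) (x) .. *)
Definition geninv_on_basis (deg : 'I_d -> gT) (M : gT -> 'M[K]_d) (k : 'I_n.-1)
    (w : {ffun 'I_n -> 'I_d}) : tensor K d n :=
  ptensor (fun p => if p == pos0 k then bvec (w (pos1 k))
                    else if p == pos1 k then
                      gactv M ((deg (w (pos1 k)))^-1)%g (bvec (w (pos0 k)))
                    else bvec (w p)).

(* action of b_{k+1} (s = true) or b_{k+1}^-1 (s = false), extended linearly *)
Definition braid_gen_act (deg : 'I_d -> gT) (M : gT -> 'M[K]_d)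
    (s : bool) (k : 'I_n.-1) (t : tensor K d n) : tensor K d n :=
  [ffun u : {ffun 'I_n -> 'I_d} => \sum_(w : {ffun 'I_n -> 'I_d})
     t w * (if s then gen_on_basis deg M k w else geninv_on_basis deg M k w) u].

(* elements of B_n, as words in the generators and their inverses:
   [:: g1; ...; gm] stands for g1 g2 ... gm *)
Definition braid_word := seq (bool * 'I_n.-1).

Definition braid_act (deg : 'I_d -> gT) (M : gT -> 'M[K]_d)
    (b : braid_word) (t : tensor K d n) : tensor K d n :=
  foldr (fun g t => braid_gen_act deg M g.1 g.2 t) t b.

(* r : antihomomorphism with r(b_i) = b_{n-i} *)
Definition braid_refl (b : braid_word) : braid_word :=
  rev (map (fun g => (g.1, rev_ord g.2)) b).

(* pairing (x_1 (x) .. (x) x_n)(v_1 (x) .. (x) v_n) = x_n(v_1) ... x_1(v_n),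
   extended bilinearly (dual bases) *)
Definition pairing (x v : tensor K d n) : K :=
  \sum_(w : {ffun 'I_n -> 'I_d}) x w * v [ffun j => w (rev_ord j)].

End Braid.

(* The pairing identifies the basis tensor [e^w] of the n-th tensor power of
   the dual with the functional dual to [e_(rev w)], so a linear map on the
   dual side given by a kernel [P w u] and one on [H^(x)n] given by [Q z u]
   are adjoint as soon as [P w (rev z) = Q z (rev w)].  For the generator
   [b_(k+1)] acting on the dual and [b_(n-k-1)] acting on [H], both kernels
   are the product of one matrix coefficient of the action, one Kronecker
   delta for the swapped pair of positions and deltas on all other positions;
   reversing the words moves positions [k, k+1] to [n-k-2, n-k-1], and the
   dual action [(M g^-1)^T] at degree [(deg a)^-1] is [M] at degree [deg a]
   read transposed.  Induction on the braid word finishes, since [r] reverses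
   words. *)

From HB Require Import structures.
From mathcomp Require Import all_boot all_order all_algebra all_fingroup.
From mathcomp Require Import zify.
Set Implicit Arguments.
Unset Strict Implicit. Unset Printing Implicit Defensive.
Import GRing.Theory.
Local Open Scope ring_scope.

Section WordReversal.
Variables (d n : nat).

Definition frev (u : {ffun 'I_n -> 'I_d}) : {ffun 'I_n -> 'I_d} :=
  [ffun j => u (rev_ord j)].

Lemma frevK : involutive frev.
Proof. by move=> u; apply/ffunP=> j; rewrite !ffunE rev_ordK. Qed.

Lemma pos0_rev_ord (k : 'I_n.-1) : pos0 (rev_ord k) = rev_ord (pos1 k).
Proof. by apply: val_inj => /=; have := ltn_ord k; lia. Qed.

Lemma pos1_rev_ord (k : 'I_n.-1) : pos1 (rev_ord k) = rev_ord (pos0 k).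
Proof. by apply: val_inj => /=; have := ltn_ord k; lia. Qed.

Lemma pos0_neq_pos1 (k : 'I_n.-1) : pos0 k != pos1 k.
Proof. by apply/eqP => /(congr1 val) /= /n_Sn. Qed.

End WordReversal.

Section Kernels.
Variables (K : fieldType) (d n : nat).

Definition kernel_act (P : {ffun 'I_n -> 'I_d} -> tensor K d n)
    (t : tensor K d n) : tensor K d n :=
  [ffun u => \sum_w t w * P w u].

Lemma pairing_kernel_act (P Q : {ffun 'I_n -> 'I_d} -> tensor K d n) :
    (forall w z, P w (frev z) = Q z (frev w)) ->
  forall x v, pairing (kernel_act P x) v = pairing x (kernel_act Q v).
Proof.
move=> PQ x v; rewrite /pairing /kernel_act.
under eq_bigr => u _ do rewrite ffunE -/(frev u) mulr_suml.
rewrite exchange_big /=; apply: eq_bigr => w _.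
rewrite ffunE -/(frev w) mulr_sumr (reindex_inj (can_inj (@frevK d n))) /=.
by apply: eq_bigr => z _; rewrite frevK PQ -mulrA [v z * _]mulrC.
Qed.

Definition agree_off (k : 'I_n.-1) (w u : {ffun 'I_n -> 'I_d}) : K :=
  \prod_(j | (j != pos0 k) && (j != pos1 k)) (w j == u j)%:R.

Lemma agree_off_frev k w z :
  agree_off k w (frev z) = agree_off (rev_ord k) z (frev w).
Proof.
rewrite /agree_off (reindex_inj rev_ord_inj) pos0_rev_ord pos1_rev_ord /=.
apply: eq_big => [j|j _]; first by rewrite andbC !(canF_eq (@rev_ordK _)).
by rewrite !ffunE rev_ordK eq_sym.
Qed.

Lemma ptensor_except_posE (k : 'I_n.-1) (A B : 'rV[K]_d)
    (w u : {ffun 'I_n -> 'I_d}) :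
  ptensor (fun p => if p == pos0 k then A else if p == pos1 k then B
                    else bvec K (w p)) u =
  A 0 (u (pos0 k)) * B 0 (u (pos1 k)) * agree_off k w u.
Proof.
have k01 := pos0_neq_pos1 k.
rewrite ffunE (bigD1 (pos0 k)) // (bigD1 (pos1 k)) 1?eq_sym //= mulrA.
rewrite eqxx eq_sym (negbTE k01) eqxx; congr (_ * _).
apply: eq_big => [j|j /andP[j0 j1]]; first by rewrite andbC.
by rewrite (negbTE j0) (negbTE j1) mxE eqxx eq_sym.
Qed.

Lemma gactv_bvec (gT : finGroupType) (N : gT -> 'M[K]_d) g a c :
  gactv N g (bvec K a) 0 c = N g c a.
Proof.
rewrite /gactv mxE (bigD1 a) //= big1 ?addr0; first by rewrite !mxE !eqxx mul1r.
by move=> i /negbTE ia; rewrite !mxE ia andbF mul0r.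
Qed.

Lemma bvec_entry (a c : 'I_d) : bvec K a 0 c = (a == c)%:R.
Proof. by rewrite /bvec mxE eq_sym. Qed.

End Kernels.

Section GeneratorKernels.
Variables (K : fieldType) (gT : finGroupType) (d n : nat).
Implicit Types (deg : 'I_d -> gT) (M : gT -> 'M[K]_d).
Implicit Types (k : 'I_n.-1) (w u z : {ffun 'I_n -> 'I_d}).

Lemma gen_on_basisE deg M k w u :
  gen_on_basis deg M k w u =
  M (deg (w (pos0 k))) (u (pos0 k)) (w (pos1 k))
    * (w (pos0 k) == u (pos1 k))%:R * agree_off K k w u.
Proof. by rewrite [LHS]ptensor_except_posE gactv_bvec bvec_entry. Qed.

Lemma geninv_on_basisE deg M k w u :
  geninv_on_basis deg M k w u =
  (w (pos1 k) == u (pos0 k))%:R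
    * M (deg (w (pos1 k)))^-1%g (u (pos1 k)) (w (pos0 k)) * agree_off K k w u.
Proof. by rewrite [LHS]ptensor_except_posE gactv_bvec bvec_entry. Qed.

Variables (deg : 'I_d -> gT) (M : gT -> 'M[K]_d).

Lemma gen_on_basis_dual k w z :
  gen_on_basis (dual_deg deg) (dual_rep M) k w (frev z) =
  gen_on_basis deg M (rev_ord k) z (frev w).
Proof.
rewrite !gen_on_basisE agree_off_frev pos0_rev_ord pos1_rev_ord !ffunE.
rewrite !rev_ordK /dual_rep /dual_deg invgK mxE eq_sym.
by case: eqP => [->|]; rewrite ?mulr0 ?mul0r.
Qed.

Lemma geninv_on_basis_dual k w z :
  geninv_on_basis (dual_deg deg) (dual_rep M) k w (frev z) =
  geninv_on_basis deg M (rev_ord k) z (frev w).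
Proof.
rewrite !geninv_on_basisE agree_off_frev pos0_rev_ord pos1_rev_ord !ffunE.
rewrite !rev_ordK /dual_rep /dual_deg !invgK mxE eq_sym.
by case: eqP => [->|]; rewrite ?mulr0 ?mul0r.
Qed.

Lemma pairing_braid_gen_act s k (x v : tensor K d n) :
  pairing (braid_gen_act (dual_deg deg) (dual_rep M) s k x) v =
  pairing x (braid_gen_act deg M s (rev_ord k) v).
Proof.
apply: (pairing_kernel_act _ x v) => w z.
by case: s; [exact: gen_on_basis_dual | exact: geninv_on_basis_dual].
Qed.

End GeneratorKernels.

Lemma braid_refl_cons n (g : bool * 'I_n.-1) (b : braid_word n) :
  braid_refl (g :: b) = rcons (braid_refl b) (g.1, rev_ord g.2).
Proof. by rewrite /braid_refl /= rev_cons. Qed.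

Theorem proposition2p37 (K : fieldType) (gT : finGroupType) (d n : nat)
    (deg : 'I_d -> gT) (M : gT -> 'M[K]_d) :
  graded_module deg M ->
  forall (b : braid_word n) (x v : tensor K d n),
    pairing (braid_act (dual_deg deg) (dual_rep M) b x) v =
    pairing x (braid_act deg M (braid_refl b) v).
Proof.
(* The identity is formal: it holds for any family of matrices [M]. *)
move=> _; elim=> [|[s k] b IH] x v //=.
by rewrite pairing_braid_gen_act IH braid_refl_cons /braid_act -cats1 foldr_cat.
Qed.
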